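(* Let $k\ge1$, let $A,B$ be disjoint $n$-element sets, and let $\mathcal S$ be a semi-intersecting family with parameters $n$ and $k$ on base sets $A,B$. If $|\mathcal S|>2k^3$, then either every element of $A$ has degree at most $k$ in $\mathcal S$, or every element of $B$ has degree at most $k$ in $\mathcal S$.
   Context: A semi-intersecting family with parameters $n,k$ on disjoint $n$-element base sets $A,B$ is a family $\mathcal S$ of subsets of $A\cup B$ with $|S\cap A|=|S\cap B|=k$ for every $S\in\mathcal S$, such that any two distinct $S,T\in\mathcal S$ satisfy exactly one of $S\cap T\cap A=\emptyset$, $S\cap T\cap B=\emptyset$. The degree of a vertex $v$ in $\mathcal S$ is the number of members of $\mathcal S$ containing $v$. *)

From mathcomp Require Import all_boot.
Set Implicit Arguments. Unset Strict Implicit. Unset Printing Implicit Defensive.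

Definition semi_intersecting (T : finType) (n k : nat) (A B : {set T})
    (F : {set {set T}}) : Prop :=
  [/\ [disjoint A & B], #|A| = n, #|B| = n,
      (forall S, S \in F -> [/\ S \subset A :|: B, #|S :&: A| = k & #|S :&: B| = k]) &
      (forall S U, S \in F -> U \in F -> S != U ->
         (S :&: U :&: A == set0) (+) (S :&: U :&: B == set0))].

Definition degree (T : finType) (F : {set {set T}}) (v : T) : nat :=
  #|[set S in F | v \in S]|.

From mathcomp Require Import all_boot zify.

Set Implicit Arguments.
Unset Strict Implicit.
Unset Printing Implicit Defensive.

(* Any member Z of the family meets every member, and |Z| <= 2k, so the
   degrees of the vertices of Z sum to at least |F| > 2k^3; hence some vertex
   x, say in A, has degree at least k^2 - k + 2.  Suppose some v in B had
   degree at least k + 1.  No two members contain both x and v, so there are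
   at least k members W through v avoiding x and at least k^2 - k + 1 members
   Y through x avoiding v.  Each such pair W, Y meets in exactly one side.
   For fixed W, the Y meeting W in B pairwise share x in A, so their traces on
   B are disjoint, and each hits W :&: B :\ v: there are at most k - 1 of them.
   Symmetrically, for fixed Y at most k - 1 of the W meet Y in A.  Counting the
   pairs gives |W||Y| <= (|W| + |Y|)(k - 1), which the two lower bounds
   contradict. *)

Lemma card_sum_pred (T : finType) (C : {set T}) (P : pred T) :
  #|[set Y in C | P Y]| = \sum_(Y in C) P Y.
Proof.
rewrite -sum1_card (eq_bigl (fun Y => (Y \in C) && P Y)) => [|Y]; last by rewrite inE.
by rewrite big_mkcondr /=; apply: eq_bigr => Y _; case: (P Y).
Qed.

Lemma card_le_traces (T : finType) (C : {set {set T}}) (D : {set T}) :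
  {in C, forall Y, Y :&: D != set0} ->
  {in C &, forall Y Y', Y != Y' -> Y :&: Y' :&: D = set0} ->
  #|C| <= #|D|.
Proof.
move=> meetD disjD; pose f (Y : {set T}) := [pick z in Y :&: D].
have fP Y : Y \in C -> exists2 z, f Y = Some z & z \in Y :&: D.
  move=> YC; rewrite /f; case: pickP => [z zYD | none]; first by exists z.
  by case/set0Pn: (meetD Y YC) => z; rewrite none.
have f_inj : {in C &, injective f}.
  move=> Y Y' YC Y'C eqf; apply/eqP; apply: contraT => neqY.
  have [z fY zYD] := fP Y YC; have [z' fY' zY'D] := fP Y' Y'C.
  move: eqf; rewrite fY fY' => -[eq_z]; subst z'.
  move/setP/(_ z): (disjD Y Y' YC Y'C neqY).
  by move: zYD zY'D; rewrite !inE => /andP[-> ->] /andP[-> _].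
rewrite -(card_in_imset f_inj) -(card_imset D (@Some_inj _)).
apply/subset_leq_card/subsetP => _ /imsetP[Y YC ->].
have [z -> /setIP[_ zD]] := fP Y YC; exact: imset_f.
Qed.

Lemma card_subsetU_le (T : finType) (A B Z : {set T}) :
  Z \subset A :|: B -> #|Z| <= #|Z :&: A| + #|Z :&: B|.
Proof.
move=> ZAB; apply: leq_trans (leq_card_setU _ _); apply: subset_leq_card.
by rewrite -setIUr; apply/subsetIP.
Qed.

Lemma lt_cross_count k a b :
  1 <= k -> k <= a -> k * k - k + 1 <= b -> (a + b) * k.-1 < a * b.
Proof.
move=> k_gt0 /subnKC <- /subnKC <-.
have [m ->] : exists m, k = m.+1 by exists k.-1; lia.
rewrite -!subn1; nia.
Qed.

Definition semi_meet (T : finType) (A B : {set T}) (F : {set {set T}}) : Prop :=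
  forall S U, S \in F -> U \in F -> S != U ->
    (S :&: U :&: A == set0) (+) (S :&: U :&: B == set0).

Definition uniform_trace (T : finType) (k : nat) (D : {set T}) (F : {set {set T}}) :=
  forall S, S \in F -> #|S :&: D| = k.

Lemma semi_meetC (T : finType) (A B : {set T}) (F : {set {set T}}) :
  semi_meet A B F -> semi_meet B A F.
Proof. by move=> meetF S U SF UF neqSU; rewrite addbC meetF. Qed.

Section Counting.

Variables (T : finType) (F : {set {set T}}).

Definition through_avoiding (a b : T) := [set S in F | (a \in S) && (b \notin S)].

Lemma card_le_sum_degree (Z : {set T}) :
  {in F, forall S, S :&: Z != set0} -> #|F| <= \sum_(u in Z) degree F u.
Proof.
move=> meetZ; under eq_bigr do rewrite /degree card_sum_pred.
rewrite exchange_big /= -sum1_card; apply: leq_sum => S SF.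
have [u /setIP[uS uZ]] := set0Pn _ (meetZ S SF).
by rewrite (bigD1 u) //= uS.
Qed.

Lemma semi_meet_disjoint A B S U a :
  semi_meet A B F -> S \in F -> U \in F -> S != U ->
  a \in S -> a \in U -> a \in A -> S :&: U :&: B = set0.
Proof.
move=> meetF SF UF neqSU aS aU aA; apply/eqP.
have /negbTE meetA : S :&: U :&: A != set0 by apply/set0Pn; exists a; rewrite !inE aS aU.
by have := meetF S U SF UF neqSU; rewrite meetA.
Qed.

Lemma degree_le_through_avoiding A B a b :
  semi_meet A B F -> a \in A -> b \in B ->
  degree F a <= #|through_avoiding a b|.+1.
Proof.
move=> meetF aA bB; have at_most_one : #|[set S in F | (a \in S) && (b \in S)]| <= 1.
  rewrite leqNgt; apply/card_gt1P => -[S [U []]].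
  rewrite !inE => /and3P[SF aS bS] /and3P[UF aU bU] neqSU.
  move/setP/(_ b): (semi_meet_disjoint meetF SF UF neqSU aS aU aA).
  by rewrite !inE bS bU bB.
rewrite -addn1; apply: leq_trans (leq_add (leqnn _) at_most_one).
rewrite /degree /through_avoiding !card_sum_pred -big_split /=.
by apply: leq_sum => S _; case: (a \in S); case: (b \in S).
Qed.

Lemma card_meet_in_B_le A B k x v W :
  semi_meet A B F -> uniform_trace k B F -> x \in A -> v \in B ->
  W \in F -> v \in W ->
  #|[set Y in through_avoiding x v | W :&: Y :&: B != set0]| <= k.-1.
Proof.
move=> meetF sizeB xA vB WF vW.
have -> : k.-1 = #|W :&: B :\ v|.
  by move: (sizeB W WF); rewrite (cardsD1 v) !inE vW vB => <-.
apply: card_le_traces => [Y | Y Y'].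
  rewrite !inE => /andP[/and3P[_ _ vY] /set0Pn[z]].
  rewrite !inE => /andP[/andP[zW zY] zB]; apply/set0Pn; exists z.
  by rewrite !inE zY zW zB /= andbT; apply: contraNneq _ vY => <-.
rewrite !inE => /andP[/and3P[YF xY _] _] /andP[/and3P[Y'F xY' _] _] neqY.
apply/eqP; rewrite -subset0 -(semi_meet_disjoint meetF YF Y'F neqY xY xY' xA).
by rewrite setIS // (subset_trans (subsetDl _ _)) ?subsetIr.
Qed.

Lemma cross_count_le A B k x v :
  semi_meet A B F -> uniform_trace k A F -> uniform_trace k B F ->
  x \in A -> v \in B ->
  #|through_avoiding v x| * #|through_avoiding x v|
    <= (#|through_avoiding v x| + #|through_avoiding x v|) * k.-1.
Proof.
move=> meetF sizeA sizeB xA vB; set Ws := through_avoiding v x; set Ys := through_avoiding x v.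
have one_side : #|Ws| * #|Ys| <= \sum_(Y in Ys) \sum_(W in Ws) (Y :&: W :&: A != set0)
                                 + \sum_(W in Ws) \sum_(Y in Ys) (W :&: Y :&: B != set0).
  rewrite exchange_big -big_split -sum_nat_const /=; apply: leq_sum => W.
  rewrite inE => /and3P[WF vW _]; rewrite -big_split -sum1_card /=.
  apply: leq_sum => Y; rewrite inE => /and3P[YF _ vY].
  have neqWY : W != Y by apply: contraNneq _ vY => <-.
  by move: (meetF W Y WF YF neqWY); rewrite [Y :&: W]setIC; case: eqP; case: eqP.
apply: leq_trans one_side _; rewrite mulnDl [_ + #|Ys| * _]addnC; apply: leq_add.
  rewrite -sum_nat_const; apply: leq_sum => Y; rewrite inE => /and3P[YF xY _].
  rewrite -card_sum_pred; exact: card_meet_in_B_le (semi_meetC meetF) sizeA vB xA YF xY.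
rewrite -sum_nat_const; apply: leq_sum => W; rewrite inE => /and3P[WF vW _].
rewrite -card_sum_pred; exact: card_meet_in_B_le meetF sizeB xA vB WF vW.
Qed.

Lemma high_degree_bounds_other_side A B k x v :
  1 <= k -> semi_meet A B F -> uniform_trace k A F -> uniform_trace k B F ->
  x \in A -> v \in B -> k * k - k + 2 <= degree F x -> degree F v <= k.
Proof.
move=> k_gt0 meetF sizeA sizeB xA vB deg_x; rewrite leqNgt; apply/negP => deg_v.
have Ws_ge : k <= #|through_avoiding v x|.
  by have := degree_le_through_avoiding (semi_meetC meetF) vB xA; lia.
have Ys_ge : k * k - k + 1 <= #|through_avoiding x v|.
  by have := degree_le_through_avoiding meetF xA vB; lia.
have := cross_count_le meetF sizeA sizeB xA vB.
by rewrite leqNgt lt_cross_count.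
Qed.

End Counting.

Lemma exists_high_degree (T : finType) n k (A B : {set T}) F :
  1 <= k -> semi_intersecting n k A B F -> 2 * k ^ 3 < #|F| ->
  exists2 u, u \in A :|: B & k * k - k + 2 <= degree F u.
Proof.
move=> k_gt0 [_ _ _ sizes meetF] largeF.
have [Z ZF] : exists Z, Z \in F by apply/card_gt0P; lia.
have [ZAB ZA ZB] := sizes Z ZF.
have meetZ : {in F, forall S, S :&: Z != set0}.
  move=> S SF; have [-> | neqSZ] := eqVneq S Z.
    have [z /setIP[zZ _]] : exists z, z \in Z :&: A by apply/card_gt0P; rewrite ZA.
    by apply/set0Pn; exists z; rewrite setIid.
  move: (meetF S Z SF ZF neqSZ); apply: contraTneq => ->.
  by rewrite !set0I eqxx.
have [/exists_inP[u uZ deg_u] | low] := boolP [exists u in Z, k * k - k + 2 <= degree F u].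
  by exists u => //; apply: (subsetP ZAB).
have cardZ : #|Z| <= 2 * k by rewrite mul2n -addnn -{1}ZA -ZB card_subsetU_le.
have : #|F| <= #|Z| * (k * k - k + 1).
  rewrite -sum_nat_const; apply: leq_trans (card_le_sum_degree meetZ) _.
  apply: leq_sum => u uZ.
  by move: low; rewrite negb_exists_in => /forall_inP/(_ u uZ); rewrite -ltnNge addn2 addn1.
have := leq_mul cardZ (leqnn (k * k - k + 1)); move: largeF; rewrite !expnS expn0; nia.
Qed.

Theorem lemma2p2 (T : finType) (n k : nat) (A B : {set T}) (F : {set {set T}}) :
  1 <= k ->
  semi_intersecting n k A B F ->
  2 * k ^ 3 < #|F| ->
  (forall v, v \in A -> degree F v <= k) \/ (forall v, v \in B -> degree F v <= k).
Proof.
move=> k_gt0 semiF largeF; have [_ _ _ sizes meetF] := semiF.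
have sizeA : uniform_trace k A F by move=> S /sizes[].
have sizeB : uniform_trace k B F by move=> S /sizes[].
have [u /setUP[uA | uB] deg_u] := exists_high_degree k_gt0 semiF largeF.
  by right=> v vB; apply: high_degree_bounds_other_side meetF sizeA sizeB uA vB deg_u.
left=> v vA.
exact: high_degree_bounds_other_side (semi_meetC meetF) sizeB sizeA uB vA deg_u.
Qed.
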